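(* Let $A,B\in\mathbb{B}(\mathscr{H})$, let $x\in\mathscr{H}$ be a unit vector, and let $f:[0,\infty)\to\mathbb{R}$ be an increasing convex function. Then for every $0<\alpha<1$, \[ f\left(|\langle Ax,x\rangle\langle Bx,x\rangle|^2\right)\le \frac{f\left(|\langle BAx,x\rangle|^2\right)+\left\langle\left(\alpha f\left(|A|^{2/\alpha}\right)+(1-\alpha)f\left(|B^*|^{2/(1-\alpha)}\right)\right)x,x\right\rangle}{2}. \] Further, \[ f\left(|\langle Ax,x\rangle\langle Bx,x\rangle|\right)\le \frac12 f\left(|\langle BAx,x\rangle|\right)+\frac14\left\langle\left(f(|A|^2)+f(|B^*|^2)\right)x,x\right\rangle. \]
   Context: $\mathscr{H}$ is a complex Hilbert space with inner product $\langle\cdot,\cdot\rangle$, $\mathbb{B}(\mathscr{H})$ is the algebra of bounded linear operators on it, $T^*$ denotes the adjoint, and $|T|=(T^*T)^{1/2}$. For a positive operator $P$ and a function $f$ on $[0,\infty)$, $f(P)$ is defined by continuous functional calculus. *)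

From HB Require Import structures.
From mathcomp Require Import all_boot all_order all_algebra.
From mathcomp Require Import complex.
From mathcomp Require Import reals exp.
Set Implicit Arguments.
Unset Strict Implicit.
Unset Printing Implicit Defensive.
Import Order.TTheory GRing.Theory Num.Theory.
Local Open Scope ring_scope.
Local Open Scope complex_scope.

Section Hilbert.
Variable R : realType.
Variable H : lmodType R[i].
Variable ip : H -> H -> R[i].  (* inner product <x, y>, linear in x *)

Definition cabs (z : R[i]) : R := Num.sqrt (complex.Re z ^+ 2 + complex.Im z ^+ 2).

Definition hnorm (x : H) : R := Num.sqrt (complex.Re (ip x x)).

Definition is_inner_product : Prop :=
  [/\ (forall (a : R[i]) (x1 x2 y : H), ip (a *: x1 + x2) y = a * ip x1 y + ip x2 y),
      (forall x y : H, ip y x = (ip x y)^*),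
      (forall x : H, 0 <= complex.Re (ip x x)) &
      (forall x : H, ip x x = 0 -> x = 0)].

Definition is_complete : Prop :=
  forall u : nat -> H,
    (forall e : R, 0 < e -> exists N : nat, forall m n : nat,
        (N <= m)%N -> (N <= n)%N -> hnorm (u m - u n) < e) ->
    exists l : H, forall e : R, 0 < e -> exists N : nat, forall n : nat,
        (N <= n)%N -> hnorm (u n - l) < e.

Definition is_hilbert : Prop := is_inner_product /\ is_complete.

Definition is_bounded (T : H -> H) : Prop :=
  (forall (a : R[i]) (x y : H), T (a *: x + y) = a *: T x + T y) /\
  exists M : R, forall x : H, hnorm (T x) <= M * hnorm x.

Definition is_adjoint (T Ts : H -> H) : Prop :=
  forall x y : H, ip (T x) y = ip x (Ts y).

Definition peval (p : {poly R}) (P : H -> H) (x : H) : H :=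
  \sum_(i < size p) ((p`_i)%:C *: iter i P x).

(* continuous functional calculus: T = g(P) for a positive operator P.
   g(P) is the operator-norm limit of p(P) for polynomials p converging
   uniformly to g on [0, M] for any bound M >= ||P|| (sigma(P) lies in [0,||P||]).
   This relation determines T uniquely, and such T exists whenever g is
   continuous on [0, infinity) and P is positive. *)
Definition is_fcalc (P : H -> H) (g : R -> R) (T : H -> H) : Prop :=
  forall M : R, 0 <= M -> (forall x : H, hnorm (P x) <= M * hnorm x) ->
  forall e : R, 0 < e -> exists p : {poly R},
    (forall t : R, 0 <= t <= M -> `|p.[t] - g t| <= e) /\
    (forall x : H, hnorm (T x - peval p P x) <= e * hnorm x).

End Hilbert.

Definition increasing_on_nonneg (R : realType) (f : R -> R) : Prop :=
  forall x y : R, 0 <= x -> x <= y -> f x <= f y.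

Definition convex_on_nonneg (R : realType) (f : R -> R) : Prop :=
  forall x y t : R, 0 <= x -> 0 <= y -> 0 <= t <= 1 ->
    f (t * x + (1 - t) * y) <= t * f x + (1 - t) * f y.

From HB Require Import structures.
From mathcomp Require Import all_boot all_order all_algebra.
From mathcomp Require Import complex.
From mathcomp Require Import reals exp classical_sets.
From mathcomp Require Import ring lra zify.
Import Order.TTheory GRing.Theory Num.Theory.
Local Open Scope ring_scope.
Local Open Scope complex_scope.
Set Implicit Arguments.
Unset Strict Implicit.
Unset Printing Implicit Defensive.

(* Buzano's inequality with a = Ax, b = B*x gives
     2 |<Ax,x><Bx,x>| <= |<BAx,x>| + |Ax| |B*x|,
   so by monotonicity and midpoint convexity everything reduces to bounding
   f(|Ax|^2 |B*x|^2) (resp. f(|Ax| |B*x|)).  With |Ax| = ||A|x| these follow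
   from Young's (resp. the AM-GM) inequality, convexity of f, and the operator
   Jensen inequality f(<Px,x>) <= <f(P)x,x> together with its power version
   <|A|x,|A|x>^q <= <|A|^(2q)x,x>.

   The functional calculus is given by uniform polynomial approximation, so
   its properties are derived from polynomials: a polynomial positive on
   [0, M] is a sum of terms g^2, g^2 X, g^2 (M - X) (proved by factoring over
   the complex numbers), hence p(P) is positive for a positive P bounded by M.
   This makes the calculus monotone, which yields positivity, self-adjointness
   and linearity of h(P), the identity sqrt(P)^2 = P, and the Jensen-type
   inequalities by comparing f with its tangent lines. *)
Section PositivePolynomials.
Variable R : realType.
Variable M : R.
Hypothesis M_gt0 : 0 < M.

(* Each such term is visibly nonnegative on [0, M], and the same
   certificates make sense for a positive operator bounded by M. *)
Inductive sos_cert : {poly R} -> Prop :=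
| SosSq g : sos_cert (g * g)
| SosX g : sos_cert (g * g * 'X)
| SosMX g : sos_cert (g * g * (M%:P - 'X))
| SosAdd p q : sos_cert p -> sos_cert q -> sos_cert (p + q).

Lemma sos_sqC c : 0 <= c -> sos_cert c%:P.
Proof.
move=> c0; have -> : c%:P = (Num.sqrt c)%:P * (Num.sqrt c)%:P.
  by rewrite -polyCM -expr2 sqr_sqrtr.
exact: SosSq.
Qed.

Lemma sos_mul_sq g p : sos_cert p -> sos_cert (g * g * p).
Proof.
elim=> [h|h|h|p1 q1 _ IH1 _ IH2].
- have -> : g * g * (h * h) = (g * h) * (g * h) by ring.
  exact: SosSq.
- have -> : g * g * (h * h * 'X) = (g * h) * (g * h) * 'X by ring.
  exact: SosX.
- have -> : g * g * (h * h * (M%:P - 'X)) = (g * h) * (g * h) * (M%:P - 'X)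
    by ring.
  exact: SosMX.
- by rewrite mulrDr; apply: SosAdd.
Qed.

(* X (M - X) = c^2 (M - X)^2 X + c^2 X^2 (M - X) with c = 1 / sqrt M. *)
Lemma sos_X_MX : sos_cert ('X * (M%:P - 'X)).
Proof.
set c := (Num.sqrt M)^-1.
have hc : c * c * M = 1.
  by rewrite /c -invfM -expr2 sqr_sqrtr ?mulVf // ?gt_eqF // ltW.
have -> : 'X * (M%:P - 'X) = (c%:P * (M%:P - 'X)) * (c%:P * (M%:P - 'X)) * 'X
    + (c%:P * 'X) * (c%:P * 'X) * (M%:P - 'X).
  have -> : (c%:P * (M%:P - 'X)) * (c%:P * (M%:P - 'X)) * 'X
      + (c%:P * 'X) * (c%:P * 'X) * (M%:P - 'X)
      = (c%:P * c%:P * M%:P) * ('X * (M%:P - 'X)) by ring.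
  by rewrite -!polyCM hc mul1r.
by apply: SosAdd; [apply: SosX | apply: SosMX].
Qed.

Lemma sos_mulX q : sos_cert q -> sos_cert ('X * q).
Proof.
elim=> [h|h|h|p1 q1 _ IH1 _ IH2].
- by rewrite mulrC; apply: SosX.
- have -> : 'X * (h * h * 'X) = (h * 'X) * (h * 'X) by ring.
  exact: SosSq.
- have -> : 'X * (h * h * (M%:P - 'X)) = h * h * ('X * (M%:P - 'X)) by ring.
  exact/sos_mul_sq/sos_X_MX.
- by rewrite mulrDr; apply: SosAdd.
Qed.

Lemma sos_mulMX q : sos_cert q -> sos_cert ((M%:P - 'X) * q).
Proof.
elim=> [h|h|h|p1 q1 _ IH1 _ IH2].
- by rewrite mulrC; apply: SosMX.
- have -> : (M%:P - 'X) * (h * h * 'X) = h * h * ('X * (M%:P - 'X)) by ring.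
  exact/sos_mul_sq/sos_X_MX.
- have -> : (M%:P - 'X) * (h * h * (M%:P - 'X))
    = (h * (M%:P - 'X)) * (h * (M%:P - 'X)) by ring.
  exact: SosSq.
- by rewrite mulrDr; apply: SosAdd.
Qed.

Lemma sos_mul p q : sos_cert p -> sos_cert q -> sos_cert (p * q).
Proof.
move=> Sp Sq; elim: Sp => [h|h|h|p1 q1 _ IH1 _ IH2].
- exact: sos_mul_sq.
- have -> : h * h * 'X * q = h * h * ('X * q) by ring.
  exact/sos_mul_sq/sos_mulX.
- have -> : h * h * (M%:P - 'X) * q = h * h * ((M%:P - 'X) * q) by ring.
  exact/sos_mul_sq/sos_mulMX.
- by rewrite mulrDl; apply: SosAdd.
Qed.

Definition pos_on (p : {poly R}) := forall t, 0 <= t <= M -> 0 < p.[t].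

Lemma size_factor_lt (p q d : {poly R}) :
  p != 0 -> p = q * d -> (1 < size d)%N -> (size q < size p)%N.
Proof.
move=> p0 pqd sd.
have q0 : q != 0 by apply: contraNneq p0 => q0; rewrite pqd q0 mul0r.
have d0 : d != 0 by rewrite -size_poly_gt0; apply: ltnW.
have := size_poly_gt0 q; rewrite q0 pqd size_mul //; move: sd.
by move: (size q) (size d) => m n; lia.
Qed.

(* A real root lies outside [0, M]; splitting off the corresponding linear
   factor, which is X - a (if a < 0) or a - X (if a > M), leaves a positive
   cofactor up to sign. *)
Lemma real_root_split p a : pos_on p -> root p a ->
  exists q d, [/\ p = q * d, sos_cert d, pos_on q & size d = 2%N].
Proof.
move=> hp ra; have [q pq] := factor_theorem _ _ ra.
have pt t : p.[t] = q.[t] * (t - a) by rewrite pq hornerM hornerXsubC.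
have [aneg | apos] := ltrP a 0.
  exists q, ('X - a%:P); split => //; last by rewrite size_XsubC.
    have -> : 'X - a%:P = 1 * 1 * 'X + (- a)%:P by rewrite !mul1r polyCN.
    by apply: SosAdd; [apply: SosX | apply: sos_sqC; lra].
  by move=> t ht; have := hp t ht; rewrite pt; case/andP: ht => ht0 _; nra.
have [aM | aM] := ltrP M a.
  exists (- q), (a%:P - 'X); split; first by rewrite pq; ring.
  - have -> : a%:P - 'X = 1 * 1 * (M%:P - 'X) + (a - M)%:P.
      by rewrite !mul1r polyCB; ring.
    by apply: SosAdd; [apply: SosMX | apply: sos_sqC; lra].
  - move=> t ht; have := hp t ht; rewrite pt hornerN.
    by case/andP: ht => _ htM; nra.
  - by rewrite -opprB size_polyN size_XsubC.
by have := hp a; rewrite apos aM (rootP ra) ltxx => /(_ isT).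
Qed.

(* A non-real root a + ib yields the real quadratic factor (X - a)^2 + b^2,
   which is a certificate and is positive everywhere. *)
Lemma complex_root_split p a b : pos_on p -> b != 0 ->
  root (map_poly (real_complex R) p) (a +i* b) ->
  exists q d, [/\ p = q * d, sos_cert d, pos_on q & size d = 3%N].
Proof.
move=> hp bn0 rz.
set pc := map_poly (real_complex R) p in rz.
pose d : {poly R} := ('X - a%:P) ^+ 2 + (b ^+ 2)%:P.
have b2 : 0 < b ^+ 2 by rewrite exprn_even_gt0.
have dpos t : 0 < d.[t].
  rewrite hornerD horner_exp hornerXsubC hornerC.
  by have := sqr_ge0 (t - a); lra.
have rzc : root pc (a -i* b).
  have pcc : map_poly conjc pc = pc.
    by rewrite /pc -map_poly_comp; apply: eq_map_poly => c /=; exact: conjc_real.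
  suff : root pc (a +i* b)^* by [].
  by rewrite -complex_root_conj pcc.
have [q1 pq1] := factor_theorem _ _ rz.
have rq1 : root q1 (a -i* b).
  move: rzc; rewrite /root pq1 hornerM hornerXsubC mulf_eq0 => /orP [//|].
  rewrite subr_eq0 eq_complex /= => /andP [_ /eqP hb].
  by move/eqP: bn0; lra.
have [q2 pq2] := factor_theorem _ _ rq1.
have md : map_poly (real_complex R) d = ('X - (a -i* b)%:P) * ('X - (a +i* b)%:P).
  rewrite /d rmorphD rmorphXn /= map_polyXsubC map_polyC /=.
  have -> : a -i* b = a%:C - (0 +i* b) by simpc.
  have -> : a +i* b = a%:C + (0 +i* b) by simpc.
  have -> : ((b ^+ 2)%:C)%:P = - ((0 +i* b)%:P * (0 +i* b)%:P).
    by rewrite -polyCM -polyCN; congr (_%:P); simpc; rewrite expr2.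
  rewrite polyCB polyCD; ring.
have dd : d %| p.
  rewrite -(dvdp_map (real_complex R)) md -/pc pq1 pq2 -mulrA.
  exact: dvdp_mulIr.
exists (p %/ d), d; split; first by rewrite divpK.
- by apply: SosAdd; [rewrite expr2; apply: SosSq | exact: sos_sqC (ltW b2)].
- by move=> t ht; have := hp t ht; rewrite -{1}(divpK dd) hornerM pmulr_lgt0.
- rewrite /d size_polyDl ?size_exp_XsubC // size_polyC.
  by case: (b ^+ 2 != 0).
Qed.

(* Every polynomial positive on [0, M] has a certificate: induct on the size,
   splitting off a linear or quadratic factor at a complex root. *)
Lemma pos_sos p : pos_on p -> sos_cert p.
Proof.
move: {2}(size p) (leqnn (size p)) => n; elim: n p => [|n IH] p hs hp;
  have hp0 : 0 < p.[0] by apply: hp; rewrite lexx ltW.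
  by move: hs hp0; rewrite leqn0 size_poly_eq0 => /eqP ->; rewrite horner0 ltxx.
have p0 : p != 0 by apply: contraTneq hp0 => ->; rewrite horner0 ltxx.
have [sz1 | szn1] := eqVneq (size p) 1%N.
  by rewrite [p]size1_polyC ?sz1 //; apply/sos_sqC/ltW; rewrite -horner_coef0.
have [[a b] rz] : exists z, root (map_poly (real_complex R) p) z.
  by apply/closed_rootP; rewrite size_map_poly.
have [q [d [pqd Sd hq sd]]] :
    exists q d, [/\ p = q * d, sos_cert d, pos_on q & (1 < size d)%N].
  have [b0 | bn0] := eqVneq b 0.
    subst b; have ra : root p a by rewrite -(fmorph_root (real_complex R)).
    by have [q [d [? ? ? sd]]] := real_root_split hp ra; exists q, d; rewrite sd.
  by have [q [d [? ? ? sd]]] := complex_root_split hp bn0 rz; exists q, d; rewrite sd.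
rewrite pqd; apply: sos_mul Sd; apply: IH hq.
by have := size_factor_lt p0 pqd sd; lia.
Qed.
End PositivePolynomials.

Section ComplexModulus.
Variable R : realType.
Implicit Types a b c : R[i].

Lemma Re_conjc c : complex.Re (c^*) = complex.Re c.
Proof. by case: c. Qed.
Lemma Im_conjc c : complex.Im (c^*) = - complex.Im c.
Proof. by case: c. Qed.
Lemma ReM_real (t : R) c : complex.Re (t%:C * c) = t * complex.Re c.
Proof. by case: c => u v /=; simpc. Qed.
Lemma Im_add a b : complex.Im (a + b) = complex.Im a + complex.Im b.
Proof. by case: a; case: b. Qed.
Lemma real_of_Im0 c : complex.Im c = 0 -> c = (complex.Re c)%:C.
Proof. by case: c => u v /= ->. Qed.

Lemma cabs_norm c : `|c| = (cabs c)%:C.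
Proof. by rewrite normc_def. Qed.
Lemma cabs_ge0 c : 0 <= cabs c.
Proof. exact: sqrtr_ge0. Qed.
Lemma cabs_eq0 c : cabs c = 0 -> c = 0.
Proof. by move=> h; apply/eqP; rewrite -normr_eq0 cabs_norm h. Qed.
Lemma cabsD a b : cabs (a + b) <= cabs a + cabs b.
Proof. by rewrite -lecR rmorphD /= -!cabs_norm ler_normD. Qed.
Lemma cabsN a : cabs (- a) = cabs a.
Proof. by apply: (@complexI R); rewrite -!cabs_norm normrN. Qed.
Lemma cabsMn a n : cabs (a *+ n) = cabs a *+ n.
Proof. by apply: (@complexI R); rewrite rmorphMn /= -!cabs_norm normrMn. Qed.
Lemma cabs1 : cabs (1 : R[i]) = 1.
Proof. by rewrite /cabs /= expr1n expr0n addr0 sqrtr1. Qed.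
Lemma cabsC (t : R) : cabs t%:C = `|t|.
Proof. by rewrite /cabs /= expr0n /= addr0 sqrtr_sqr. Qed.
Lemma cabs_conj a : cabs (a^*) = cabs a.
Proof. by case: a => u v; rewrite /cabs /= sqrrN. Qed.
Lemma cabs_sq a : cabs a ^+ 2 = complex.Re a ^+ 2 + complex.Im a ^+ 2.
Proof. by rewrite sqr_sqrtr // addr_ge0 // sqr_ge0. Qed.
Lemma mul_conj a : a * a^* = (cabs a ^+ 2)%:C.
Proof.
rewrite cabs_sq; case: a => u v /=; simpc.
by apply/eqP; rewrite eq_complex /= !expr2 [v * u]mulrC addNr !eqxx.
Qed.
Lemma Re_le_cabs a : `|complex.Re a| <= cabs a.
Proof.
rewrite -(ler_pXn2r (_ : 0 < 2)%N) ?nnegrE ?cabs_ge0 // cabs_sq.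
by rewrite real_normK ?num_real // lerDl sqr_ge0.
Qed.
Lemma Im_le_cabs a : `|complex.Im a| <= cabs a.
Proof.
rewrite -(ler_pXn2r (_ : 0 < 2)%N) ?nnegrE ?cabs_ge0 // cabs_sq.
by rewrite real_normK ?num_real // lerDr sqr_ge0.
Qed.
End ComplexModulus.

Section InnerProduct.
Variable R : realType.
Variable H : lmodType R[i].
Variable ip : H -> H -> R[i].
Hypothesis hip : is_inner_product ip.

Local Notation rip x y := (complex.Re (ip x y)).
Local Notation hn := (hnorm ip).

Lemma ipDZl a x1 x2 y : ip (a *: x1 + x2) y = a * ip x1 y + ip x2 y.
Proof. by case: hip. Qed.
Lemma ip_sym x y : ip y x = (ip x y)^*.
Proof. by case: hip. Qed.
Lemma ip_ge0 x : 0 <= rip x x.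
Proof. by case: hip. Qed.
Lemma ip_def x : ip x x = 0 -> x = 0.
Proof. by case: hip => _ _ _; apply. Qed.

Lemma ip0l y : ip 0 y = 0.
Proof.
have := ipDZl 1 0 0 y; rewrite scaler0 addr0 mul1r.
by rewrite -{1}[ip 0 y]addr0 => /addrI ->.
Qed.
Lemma ipDl x y z : ip (x + y) z = ip x z + ip y z.
Proof. by rewrite -[x]scale1r ipDZl mul1r scale1r. Qed.
Lemma ipZl a x z : ip (a *: x) z = a * ip x z.
Proof. by rewrite -[a *: x]addr0 ipDZl ip0l addr0. Qed.
Lemma ipNl x z : ip (- x) z = - ip x z.
Proof. by rewrite -scaleN1r ipZl mulN1r. Qed.
Lemma ipBl x y z : ip (x - y) z = ip x z - ip y z.
Proof. by rewrite ipDl ipNl. Qed.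
Lemma ip_suml (I : finType) (F : I -> H) z :
  ip (\sum_i F i) z = \sum_i ip (F i) z.
Proof.
apply: (big_rec2 (fun a b => ip b z = a)); first by rewrite ip0l.
by move=> i a b _ <-; rewrite ipDl.
Qed.
Lemma ip0r y : ip y 0 = 0.
Proof. by rewrite ip_sym ip0l conjc0. Qed.
Lemma ipDr x y z : ip z (x + y) = ip z x + ip z y.
Proof. by rewrite ip_sym ipDl rmorphD /= -!ip_sym. Qed.
Lemma ipZr a x z : ip z (a *: x) = conjc a * ip z x.
Proof. by rewrite ip_sym ipZl rmorphM /= -!ip_sym. Qed.
Lemma ipNr x z : ip z (- x) = - ip z x.
Proof. by rewrite ip_sym ipNl rmorphN /= -!ip_sym. Qed.
Lemma ipBr x y z : ip z (x - y) = ip z x - ip z y.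
Proof. by rewrite ipDr ipNr. Qed.
Lemma ip_sumr (I : finType) (F : I -> H) z :
  ip z (\sum_i F i) = \sum_i ip z (F i).
Proof.
apply: (big_rec2 (fun a b => ip z b = a)); first by rewrite ip0r.
by move=> i a b _ <-; rewrite ipDr.
Qed.

Lemma rip_sym x y : rip y x = rip x y.
Proof. by rewrite ip_sym Re_conjc. Qed.
Lemma ipxx x : ip x x = (rip x x)%:C.
Proof.
apply: real_of_Im0; have := congr1 (@complex.Im R) (ip_sym x x).
by rewrite Im_conjc; lra.
Qed.
Lemma rip_def x : rip x x = 0 -> x = 0.
Proof. by move=> h; apply: ip_def; rewrite ipxx h. Qed.
Lemma ripDl x y z : rip (x + y) z = rip x z + rip y z.
Proof. by rewrite ipDl raddfD. Qed.
Lemma ripDr x y z : rip z (x + y) = rip z x + rip z y.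
Proof. by rewrite ipDr raddfD. Qed.
Lemma ripBl x y z : rip (x - y) z = rip x z - rip y z.
Proof. by rewrite ipBl raddfB. Qed.
Lemma ripZl (t : R) x z : rip (t%:C *: x) z = t * rip x z.
Proof. by rewrite ipZl ReM_real. Qed.
Lemma ripZr (t : R) x z : rip z (t%:C *: x) = t * rip z x.
Proof. by rewrite rip_sym ripZl rip_sym. Qed.

Lemma hn_ge0 x : 0 <= hn x.
Proof. exact: sqrtr_ge0. Qed.
Lemma hn_sq x : hn x ^+ 2 = rip x x.
Proof. by rewrite sqr_sqrtr // ip_ge0. Qed.
Lemma hn0 : hn 0 = 0.
Proof. by rewrite /hnorm ip0l sqrtr0. Qed.

(* Cauchy-Schwarz for the real part: the discriminant of the nonnegative
   quadratic t |-> rip (x + t y) (x + t y) is nonpositive. *)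
Lemma cauchy_schwarz_Re x y : rip x y ^+ 2 <= rip x x * rip y y.
Proof.
have [y0|yn0] := eqVneq (rip y y) 0.
  by rewrite (rip_def y0) !ip0r /= expr0n mulr0.
have ypos : 0 < rip y y by rewrite lt_def yn0 ip_ge0.
set t := - (rip x y / rip y y).
have := ip_ge0 (x + t%:C *: y).
rewrite !(ripDl, ripDr, ripZl, ripZr) (rip_sym x y) => h.
have e : rip x x * rip y y - rip x y ^+ 2 =
  rip y y * (rip x x + t * rip x y + (t * rip x y + t * (t * rip y y))).
  by rewrite /t; field; rewrite yn0.
by rewrite -subr_ge0 e; exact: mulr_ge0 (ltW ypos) h.
Qed.

Lemma rip_le x y : rip x y <= hn x * hn y.
Proof.
rewrite -sqrtrM ?ip_ge0 //; apply: le_trans (ler_norm _) _.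
by rewrite -sqrtr_sqr ler_sqrt ?mulr_ge0 ?ip_ge0 // cauchy_schwarz_Re.
Qed.

Lemma hnD x y : hn (x + y) <= hn x + hn y.
Proof.
rewrite -(ler_pXn2r (_ : 0 < 2)%N) ?nnegrE ?addr_ge0 ?hn_ge0 //.
rewrite hn_sq !(ripDl, ripDr) (rip_sym x y) sqrrD !hn_sq.
by have := rip_le x y; rewrite mulr2n; lra.
Qed.

Lemma hnZ a x : hn (a *: x) = cabs a * hn x.
Proof.
rewrite /hnorm ipZl ipZr mulrA mul_conj ReM_real.
by rewrite sqrtrM ?sqr_ge0 // sqrtr_sqr ger0_norm ?cabs_ge0.
Qed.

Lemma hnB_le x y : hn (x - y) <= hn x + hn y.
Proof.
apply: le_trans (hnD _ _) _.
by rewrite -scaleN1r hnZ cabsN cabs1 mul1r.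
Qed.

Lemma hn_sum (I : finType) (F : I -> H) : hn (\sum_i F i) <= \sum_i hn (F i).
Proof.
apply: (big_rec2 (fun (a : R) (b : H) => hn b <= a)); first by rewrite hn0.
by move=> i a b _ h; apply: le_trans (hnD _ _) _; exact: lerD.
Qed.

(* Cauchy-Schwarz: rotate x so that its inner product with y is real. *)
Lemma cauchy_schwarz x y : cabs (ip x y) <= hn x * hn y.
Proof.
set w := ip x y.
have [w0|wn0] := eqVneq (cabs w) 0; first by rewrite w0 mulr_ge0 ?hn_ge0.
have wpos : 0 < cabs w by rewrite lt_def wn0 cabs_ge0.
have := cauchy_schwarz_Re ((w^*) *: x) y.
rewrite ipZl -/w mulrC mul_conj /= -!hn_sq hnZ cabs_conj => h.
have : cabs w ^+ 2 <= (hn x * hn y) ^+ 2.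
  rewrite -(ler_pM2l (_ : 0 < cabs w ^+ 2)); last by rewrite exprn_gt0.
  by rewrite -expr2 -exprMn_comm ?exprMn; [nra | apply: mulrC].
by rewrite ler_pXn2r ?nnegrE ?cabs_ge0 ?mulr_ge0 ?hn_ge0.
Qed.

(* Buzano's inequality for a unit vector e:
   2 |<a,e><e,b>| <= |<a,b>| + |a| |b|.  Reflect b in e: the vector
   v = 2<b,e> e - b has |v| = |b| and <a,v> = 2<a,e><e,b> - <a,b>. *)
Lemma buzano a b e : rip e e = 1 ->
  cabs (ip a e * ip e b) *+ 2 <= cabs (ip a b) + hn a * hn b.
Proof.
move=> he.
set c : R[i] := ip b e *+ 2.
set v := c *: e - b.
have hc : conjc c = ip e b *+ 2 by rewrite /c rmorphMn /= -ip_sym.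
have ee : ip e e = 1 by rewrite ipxx he.
have hnv : hn v = hn b.
  suff vb : ip v v = ip b b by rewrite /hnorm vb.
  by rewrite /v ipBl !ipBr !ipZl !ipZr ee hc /c [ip e b]ip_sym; ring.
have hav : (ip a e * ip e b) *+ 2 = ip a v + ip a b.
  by rewrite /v ipBr ipZr hc subrK mulrnAl [ip e b * _]mulrC.
rewrite -cabsMn hav; apply: le_trans (cabsD _ _) _.
by rewrite addrC lerD2l -hnv cauchy_schwarz.
Qed.
End InnerProduct.

Section LinearOperators.
Variable R : realType.
Variable H : lmodType R[i].

Definition lin_op (T : H -> H) :=
  forall (a : R[i]) x y, T (a *: x + y) = a *: T x + T y.

Variable T : H -> H.
Hypothesis hT : lin_op T.

Lemma lin0 : T 0 = 0.
Proof.
by have := hT 1 0 0; rewrite scaler0 addr0 scale1r -{1}[T 0]addr0 => /addrI /esym.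
Qed.
Lemma linD x y : T (x + y) = T x + T y.
Proof. by rewrite -[x]scale1r hT !scale1r. Qed.
Lemma linZ a x : T (a *: x) = a *: T x.
Proof. by rewrite -[a *: x]addr0 hT lin0 addr0. Qed.
Lemma linB x y : T (x - y) = T x - T y.
Proof. by rewrite linD -scaleN1r linZ scaleN1r. Qed.
Lemma lin_sum (I : finType) (F : I -> H) : T (\sum_i F i) = \sum_i T (F i).
Proof.
apply: (big_rec2 (fun a b => T b = a)); first by rewrite lin0.
by move=> i a b _ <-; rewrite linD.
Qed.
End LinearOperators.

Lemma lin_comp (R : realType) (H : lmodType R[i]) (T S : H -> H) :
  lin_op T -> lin_op S -> lin_op (fun x => T (S x)).
Proof. by move=> hT hS a x y; rewrite hS hT. Qed.

Section PolynomialCalculus.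
Variable R : realType.
Variable H : lmodType R[i].
Variable P : H -> H.
Hypothesis hP : lin_op P.

Lemma peval_sz (p : {poly R}) n x : (size p <= n)%N ->
  peval p P x = \sum_(i < n) (p`_i)%:C *: iter i P x.
Proof.
move=> hs; rewrite /peval (big_ord_widen n (fun i => (p`_i)%:C *: iter i P x) hs).
rewrite [RHS](bigID (fun i : 'I_n => (i < size p)%N)) /= [X in _ = _ + X]big1 ?addr0 //.
by move=> i; rewrite -leqNgt => /(nth_default 0) ->; rewrite scale0r.
Qed.

Lemma peval0 x : peval 0 P x = 0.
Proof. by rewrite /peval size_poly0 big_ord0. Qed.

Lemma pevalC c x : peval c%:P P x = c%:C *: x.
Proof. by rewrite (@peval_sz _ 1) ?size_polyC ?leq_b1 // big_ord1 /= coefC. Qed.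

Lemma pevalD p q x : peval (p + q) P x = peval p P x + peval q P x.
Proof.
set n := maxn (size p) (size q).
rewrite !(@peval_sz _ n) ?leq_maxl ?leq_maxr //; last first.
  by apply: leq_trans (size_polyD _ _) _.
by rewrite -big_split /=; apply: eq_bigr => i _; rewrite coefD rmorphD /= scalerDl.
Qed.

Lemma pevalZ c p x : peval (c *: p) P x = c%:C *: peval p P x.
Proof.
rewrite (@peval_sz _ (size p)) ?size_scale_leq // /peval scaler_sumr.
by apply: eq_bigr => i _; rewrite coefZ rmorphM /= scalerA.
Qed.

Lemma pevalB p q x : peval (p - q) P x = peval p P x - peval q P x.
Proof. by rewrite pevalD -(scaleN1r q) pevalZ rmorphN /= rmorph1 scaleN1r. Qed.

Lemma peval_mulX p x : peval (p * 'X) P x = peval p P (P x).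
Proof.
have [->|p0] := eqVneq p 0; first by rewrite mul0r !peval0.
rewrite (@peval_sz _ (size p).+1); last by rewrite size_mulX.
rewrite big_ord_recl coefMX eqxx /= scale0r add0r /peval.
by apply: eq_bigr => i _; rewrite coefMX /= -iterSr.
Qed.

Lemma peval_comm p x : peval p P (P x) = P (peval p P x).
Proof.
rewrite /peval (lin_sum hP); apply: eq_bigr => i _.
by rewrite (linZ hP) -iterSr -iterS.
Qed.

Lemma pevalX x : peval 'X P x = P x.
Proof. by rewrite -[X in peval X]mul1r peval_mulX pevalC scale1r. Qed.

Lemma pevalM p q x : peval (p * q) P x = peval p P (peval q P x).
Proof.
elim/poly_ind: p x => [|p c IH] x; first by rewrite mul0r !peval0.
rewrite mulrDl pevalD pevalD pevalC -mulrA [_ * q]mulrC mulrA.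
by rewrite peval_mulX IH peval_mulX peval_comm mul_polyC pevalZ.
Qed.
End PolynomialCalculus.

Section Approximation.
Variable R : realType.

Lemma small_factor (e C : R) : 0 < e -> 0 <= C -> exists2 d, 0 < d <= 1 & d * C <= e.
Proof.
move=> e0 C0; exists (e / (C + e)).
  by rewrite divr_gt0 ?ltr_wpDl //= ler_pdivrMr ?ltr_wpDl // mul1r lerDr.
rewrite mulrAC ler_pdivrMr ?ltr_wpDl //; nra.
Qed.

Lemma le_approx (a b C : R) : 0 <= C -> (forall d, 0 < d -> a <= b + d * C) -> a <= b.
Proof.
move=> C0 h; apply/ler_addgt0Pr => e e0.
have [d /andP [d0 _] dC] := small_factor e0 C0.
by have := h d d0; lra.
Qed.
End Approximation.

Section PositiveOperators.
Variable R : realType.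
Variable H : lmodType R[i].
Variable ip : H -> H -> R[i].
Hypothesis hip : is_inner_product ip.
Local Notation rip x y := (complex.Re (ip x y)).
Local Notation hn := (hnorm ip).

(* An operator with an adjoint is linear, whatever the operator it is the
   adjoint of: both sides of the linearity identity have the same inner
   products with every vector. *)
Lemma adjoint_lin T Ts : is_adjoint ip T Ts -> lin_op Ts.
Proof.
move=> hTs a x y; apply/eqP; rewrite -subr_eq0; apply/eqP; apply: (ip_def hip).
rewrite {1}[X in ip X _]/(_ - _) (ipBr hip) (ipDr hip) (ipZr hip) -!hTs.
by rewrite (ipDr hip) (ipZr hip) subrr.
Qed.

Definition selfadj (T : H -> H) := is_adjoint ip T T.

Definition pos_op (P : H -> H) (M : R) :=
  [/\ lin_op P, selfadj P, (forall y, 0 <= rip (P y) y), 0 < M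
    & (forall y, hn (P y) <= M * hn y)].

Definition fcalc_on (P : H -> H) (M : R) (h : R -> R) (F : H -> H) :=
  forall e, 0 < e -> exists p : {poly R},
    (forall t, 0 <= t <= M -> `|p.[t] - h t| <= e) /\
    (forall x, hn (F x - peval p P x) <= e * hn x).

Lemma pos_op_fcalc P M h F : pos_op P M -> is_fcalc ip P h F -> fcalc_on P M h F.
Proof. by case=> _ _ _ M0 bP hF; apply: hF => //; apply: ltW. Qed.

Variables (P : H -> H) (M : R).
Hypothesis pP : pos_op P M.

Let hP : lin_op P. Proof. by case: pP. Qed.
Let saP : selfadj P. Proof. by case: pP. Qed.
Let posP y : 0 <= rip (P y) y. Proof. by case: pP. Qed.
Let M_gt0 : 0 < M. Proof. by case: pP. Qed.
Let bndP y : hn (P y) <= M * hn y. Proof. by case: pP. Qed.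

Lemma selfadj_peval p : selfadj (peval p P).
Proof.
have sa_iter n x y : ip (iter n P x) y = ip x (iter n P y).
  by elim: n x y => // n IH x y; rewrite iterS saP IH -iterSr iterS.
move=> x y; rewrite /peval (ip_suml hip) (ip_sumr hip); apply: eq_bigr => i _.
rewrite (ipZl hip) (ipZr hip) sa_iter; congr (_ * _).
by apply/eqP; rewrite eq_complex /= oppr0 !eqxx.
Qed.

Lemma peval_Im p y : complex.Im (ip (peval p P y) y) = 0.
Proof.
have := selfadj_peval p y y; rewrite [RHS](ip_sym hip).
by move=> /(congr1 (@complex.Im R)); rewrite Im_conjc; lra.
Qed.

(* Each certificate term evaluates to a positive operator; for g^2 (M - X)
   this is the bound <P z, z> <= M <z, z> with z = g(P) y. *)
Lemma sos_peval_nonneg p : sos_cert M p -> forall y, 0 <= rip (peval p P y) y.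
Proof.
elim=> [g|g|g|p1 q1 _ IH1 _ IH2] y.
- by rewrite (pevalM hP) selfadj_peval; apply: ip_ge0.
- by rewrite peval_mulX (pevalM hP) selfadj_peval (peval_comm hP).
- have -> : g * g * (M%:P - 'X) = M *: (g * g) - g * g * 'X.
    by rewrite mulrBr -mul_polyC mulrC.
  rewrite pevalB (ripBl hip) pevalZ (ripZl hip) peval_mulX !(pevalM hP).
  rewrite (selfadj_peval g (peval g P y)) (selfadj_peval g (peval g P (P y))).
  rewrite (peval_comm hP) subr_ge0.
  set z := peval g P y; apply: le_trans (rip_le hip _ _) _.
  rewrite -(hn_sq hip) expr2 mulrA; apply: ler_wpM2r; [exact: hn_ge0 | exact: bndP].
- by rewrite pevalD (ripDl hip) addr_ge0.
Qed.

(* Polynomial positivity transfers to P: a polynomial nonnegative on [0, M]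
   becomes strictly positive after adding any d > 0, hence has a certificate. *)
Lemma poly_nonneg p : (forall t, 0 <= t <= M -> 0 <= p.[t]) ->
  forall y, 0 <= rip (peval p P y) y.
Proof.
move=> hp y; rewrite -oppr_le0; apply: (le_approx (b := 0) (ip_ge0 hip y)) => d d0.
have S : sos_cert M (p + d%:P).
  by apply: (pos_sos M_gt0) => t ht; rewrite hornerD hornerC; have := hp t ht; lra.
have := sos_peval_nonneg S y.
by rewrite pevalD pevalC (ripDl hip) (ripZl hip); lra.
Qed.

Lemma peval_bound p : exists K, forall y, hn (peval p P y) <= K * hn y.
Proof.
have iter_bnd n y : hn (iter n P y) <= M ^+ n * hn y.
  elim: n => [|n IH] /=; first by rewrite expr0 mul1r.
  apply: le_trans (bndP _) _; rewrite exprS -mulrA.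
  by apply: ler_wpM2l => //; exact: ltW.
exists (\sum_(i < size p) `|p`_i| * M ^+ i) => y.
apply: le_trans (hn_sum hip _) _; rewrite mulr_suml; apply: ler_sum => i _.
by rewrite (hnZ hip) cabsC -mulrA; apply: ler_wpM2l => //; exact: iter_bnd.
Qed.

Variables (h : R -> R) (F : H -> H).
Hypothesis hF : fcalc_on P M h F.

Lemma fcalc_form_err p d y : (forall x, hn (F x - peval p P x) <= d * hn x) ->
  `|rip (F y) y - rip (peval p P y) y| <= d * rip y y.
Proof.
move=> hp; rewrite -(ripBl hip) -(hn_sq hip) expr2 mulrA.
apply: le_trans (Re_le_cabs _) _; apply: le_trans (cauchy_schwarz hip _ _) _.
by apply: ler_wpM2r; [exact: hn_ge0 | exact: hp].
Qed.

Lemma fcalc_ge (l : {poly R}) : (forall t, 0 <= t <= M -> l.[t] <= h t) ->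
  forall y, rip (peval l P y) y <= rip (F y) y.
Proof.
move=> hl y; apply: (le_approx (mulr_ge0 (ler0n _ 2) (ip_ge0 hip y))) => d d0.
have [p [hp1 hp2]] := hF d0.
have := fcalc_form_err y hp2; rewrite ler_norml => /andP [h1 _].
have : 0 <= rip (peval (p - l + d%:P) P y) y.
  apply: poly_nonneg => t ht; rewrite !(hornerD, hornerN, hornerC).
  by have := hp1 t ht; have := hl t ht; rewrite ler_norml; lra.
by rewrite pevalD pevalB pevalC (ripDl hip) (ripBl hip) (ripZl hip); lra.
Qed.

Lemma fcalc_le (l : {poly R}) : (forall t, 0 <= t <= M -> h t <= l.[t]) ->
  forall y, rip (F y) y <= rip (peval l P y) y.
Proof.
move=> hl y; apply: (le_approx (mulr_ge0 (ler0n _ 2) (ip_ge0 hip y))) => d d0.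
have [p [hp1 hp2]] := hF d0.
have := fcalc_form_err y hp2; rewrite ler_norml => /andP [_ h2].
have : 0 <= rip (peval (l - p + d%:P) P y) y.
  apply: poly_nonneg => t ht; rewrite !(hornerD, hornerN, hornerC).
  by have := hp1 t ht; have := hl t ht; rewrite ler_norml; lra.
by rewrite pevalD pevalB pevalC (ripDl hip) (ripBl hip) (ripZl hip); lra.
Qed.

Lemma fcalc_poly_eq (l : {poly R}) : (forall t, 0 <= t <= M -> h t = l.[t]) ->
  forall y, rip (F y) y = rip (peval l P y) y.
Proof.
move=> hl y; apply/le_anti.
by rewrite fcalc_le ?fcalc_ge // => t /hl ->.
Qed.

(* <F y, y> is real: it is a limit of the real numbers <p(P) y, y>. *)
Lemma fcalc_Im y : complex.Im (ip (F y) y) = 0.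
Proof.
apply/eqP; rewrite -normr_le0; apply: (le_approx (b := 0) (ip_ge0 hip y)) => d d0.
have [p [_ hp2]] := hF d0.
have -> : ip (F y) y = ip (F y - peval p P y) y + ip (peval p P y) y.
  by rewrite (ipBl hip) subrK.
rewrite Im_add peval_Im addr0; apply: le_trans (Im_le_cabs _) _.
apply: le_trans (cauchy_schwarz hip _ _) _.
apply: le_trans (ler_wpM2r (hn_ge0 _ _) (hp2 y)) _.
by rewrite -mulrA -expr2 (hn_sq hip) add0r.
Qed.

(* F is self-adjoint, as an operator-norm limit of self-adjoint p(P). *)
Lemma fcalc_selfadj : selfadj F.
Proof.
move=> x y; apply/eqP; rewrite -subr_eq0; apply/eqP; apply: cabs_eq0.
apply/le_anti; rewrite cabs_ge0 andbT.
apply: (le_approx (b := 0) (C := hn x * hn y *+ 2)).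
  by rewrite mulrn_wge0 ?mulr_ge0 ?hn_ge0.
move=> d d0; rewrite add0r; have [p [_ hp2]] := hF d0.
have -> : ip (F x) y - ip x (F y) =
    ip (F x - peval p P x) y - ip x (F y - peval p P y).
  by rewrite (ipBl hip) (ipBr hip) selfadj_peval opprB addrA subrK.
apply: le_trans (cabsD _ _) _; rewrite cabsN mulrnAr mulr2n.
have h1 := le_trans (cauchy_schwarz hip _ _) (ler_wpM2r (hn_ge0 ip y) (hp2 x)).
have h2 := le_trans (cauchy_schwarz hip _ _) (ler_wpM2l (hn_ge0 ip x) (hp2 y)).
by apply: lerD; [rewrite mulrA | rewrite mulrCA].
Qed.

Lemma fcalc_pos_op : (forall t, 0 <= t <= M -> 0 <= h t) -> exists K, pos_op F K.
Proof.
move=> hh; have [p [_ hp2]] := hF ltr01.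
have [K hK] := peval_bound p.
exists (`|K| + 1); split.
- exact: adjoint_lin fcalc_selfadj.
- exact: fcalc_selfadj.
- move=> y; have := fcalc_ge (l := 0) _ y; rewrite peval0 (ip0l hip); apply.
  by move=> t ht; rewrite horner0; apply: hh.
- by rewrite ltr_wpDl.
- move=> y; have -> : F y = (F y - peval p P y) + peval p P y by rewrite subrK.
  apply: le_trans (hnD hip _ _) _; rewrite mulrDl mul1r addrC.
  apply: lerD; first exact: le_trans (hK y) (ler_wpM2r (hn_ge0 _ _) (ler_norm _)).
  by rewrite -[hn y]mul1r hp2.
Qed.

(* F o F = h^2(P): square an approximating polynomial p; the error of p^2 is
   controlled by the error of p and the bounds on h and on F. *)
Lemma fcalc_sq K0 KF : (forall t, 0 <= t <= M -> `|h t| <= K0) -> 0 < KF ->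
  (forall y, hn (F y) <= KF * hn y) ->
  fcalc_on P M (fun t => h t ^+ 2) (fun y => F (F y)).
Proof.
move=> hK0 KF0 hKF e e0.
have K00 : 0 <= K0 by apply: le_trans (hK0 0 _); rewrite ?normr_ge0 // lexx ltW.
have C0 : 0 <= 2 * K0 + 2 * KF + 1 by lra.
have [d /andP [d0 d1] hd] := small_factor e0 C0.
have [p [hp1 hp2]] := hF d0.
exists (p * p); split.
  move=> t ht; rewrite hornerM.
  have := hp1 t ht; have := hK0 t ht; set a := p.[t]; set b := h t => hb hab.
  have -> : a * a - b ^+ 2 = (a - b) * ((a - b) + 2 * b) by ring.
  have hab2 : `|a - b + 2 * b| <= 1 + 2 * K0.
    by apply: le_trans (ler_normD _ _) _; rewrite normrM ger0_norm //; lra.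
  rewrite normrM; apply: le_trans (ler_pM (normr_ge0 _) (normr_ge0 _) hab hab2) _.
  by nra.
move=> y; rewrite (pevalM hP).
have hFl := adjoint_lin fcalc_selfadj.
have -> : F (F y) - peval p P (peval p P y) =
    F (F y - peval p P y) + (F (peval p P y) - peval p P (peval p P y)).
  by rewrite (linB hFl) addrA subrK.
apply: le_trans (hnD hip _ _) _.
have hy := hn_ge0 ip y.
have hpy : hn (peval p P y) <= (KF + 1) * hn y.
  have -> : peval p P y = F y - (F y - peval p P y) by rewrite opprB addrC subrK.
  apply: le_trans (hnB_le hip _ _) _; have := hKF y; have := hp2 y; nra.
have h1 := le_trans (hKF _) (ler_wpM2l (ltW KF0) (hp2 y)).
have h2 := le_trans (hp2 _) (ler_wpM2l (ltW d0) hpy).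
have := mulr_ge0 (mulr_ge0 (ltW d0) K00) hy; have := ler_wpM2r hy hd; lra.
Qed.
End PositiveOperators.

Section ConvexFunctions.
Local Open Scope classical_set_scope.
Variable R : realType.
Variable f : R -> R.
Hypothesis hfi : increasing_on_nonneg f.
Hypothesis hfc : convex_on_nonneg f.

Lemma three_slope u s v : 0 <= u -> u < s -> s < v ->
  (f s - f u) * (v - s) <= (f v - f s) * (s - u).
Proof.
move=> u0 us sv; set l := (v - s) / (v - u).
have vu : 0 < v - u by lra.
have l0 : 0 <= l by apply: divr_ge0; lra.
have l1 : l <= 1 by rewrite ler_pdivrMr // mul1r; lra.
have hs : l * u + (1 - l) * v = s by rewrite /l; field; lra.
have := hfc (x := u) (y := v) (t := l) u0 (ltW (le_lt_trans u0 (lt_trans us sv))).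
rewrite l0 l1 hs => /(_ isT) h.
have e1 : l * (v - u) = v - s by rewrite /l divfK // gt_eqF.
nra.
Qed.

(* A convex increasing f has a supporting line at every s >= 0; its slope is
   the supremum of the slopes of the chords ending at s (0 if s = 0). *)
Lemma supporting_line s : 0 <= s ->
  exists c, forall t, 0 <= t -> f s + c * (t - s) <= f t.
Proof.
move=> s0; have [->|sp] := eqVneq s 0.
  by exists 0 => t t0; rewrite mul0r addr0; apply: hfi.
have spos : 0 < s by rewrite lt_def sp s0.
pose E : set R := fun y => exists u, [/\ 0 <= u, u < s & y = (f s - f u) / (s - u)].
have E0 : E !=set0 by exists ((f s - f 0) / (s - 0)), 0; split.
have ubE v : s < v -> ubound E ((f v - f s) / (v - s)).
  move=> sv y [u [u0 us ->]].
  rewrite ler_pdivrMr ?subr_gt0 // mulrAC ler_pdivlMr ?subr_gt0 //.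
  exact: three_slope.
have hsE : has_sup E.
  by split => //; exists ((f (s + 1) - f s) / (s + 1 - s)); apply: ubE; lra.
exists (sup E) => t t0.
have [ts|st] := ltrP t s.
  have Et : E ((f s - f t) / (s - t)) by exists t; split.
  have := sup_upper_bound hsE Et; rewrite ler_pdivrMr ?subr_gt0 //; lra.
have [->|tns] := eqVneq t s; first by rewrite subrr mulr0 addr0.
have st' : s < t by rewrite lt_def tns st.
by have := ge_sup E0 (ubE t st'); rewrite ler_pdivlMr ?subr_gt0 //; lra.
Qed.

Lemma convex_midpoint a b : 0 <= a -> 0 <= b -> f ((a + b) / 2) <= (f a + f b) / 2.
Proof.
move=> a0 b0; have := hfc (t := 1 / 2) a0 b0.
have -> : 1 / 2 * a + (1 - 1 / 2) * b = (a + b) / 2 by field.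
have -> : 1 / 2 * f a + (1 - 1 / 2) * f b = (f a + f b) / 2 by field.
by apply; apply/andP; split; lra.
Qed.

Lemma midpoint_bound w u v : 0 <= w -> 0 <= u -> 0 <= v -> w *+ 2 <= u + v ->
  f w <= (f u + f v) / 2.
Proof.
move=> w0 u0 v0 h; apply: le_trans (convex_midpoint u0 v0).
by apply: hfi => //; rewrite mulr2n in h; lra.
Qed.

Lemma midpoint_bound_sq w u v : 0 <= w -> 0 <= u -> 0 <= v -> w *+ 2 <= u + v ->
  f (w ^+ 2) <= (f (u ^+ 2) + f (v ^+ 2)) / 2.
Proof.
move=> w0 u0 v0 h; apply: le_trans (convex_midpoint (sqr_ge0 u) (sqr_ge0 v)).
apply: hfi; first exact: sqr_ge0.
have h2 := ler_pM (mulrn_wge0 2 w0) (mulrn_wge0 2 w0) h h.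
by have := sqr_ge0 (u - v); rewrite mulr2n !expr2 in h2 *; nra.
Qed.
End ConvexFunctions.

(* Tangent line of the convex power t |-> t^p (p > 1) at s, from Young's
   inequality y s^(p-1) <= y^p / p + s^p / q. *)
Lemma pow_tangent (R : realType) (p s y : R) : 1 < p -> 0 <= s -> 0 <= y ->
  s `^ p + p * s `^ (p - 1) * (y - s) <= y `^ p.
Proof.
move=> p1 s0 y0; have p0 : 0 < p by lra.
set q := p / (p - 1).
have q0 : 0 < q by rewrite divr_gt0 // subr_gt0.
have pq : p^-1 + q^-1 = 1 by rewrite /q invf_div; field; lra.
have := conjugate_powR y0 (powR_ge0 s (p - 1)) p0 q0 pq.
rewrite -powRrM (_ : (p - 1) * q = p); last by rewrite /q; field; lra.
move=> /(ler_wpM2l (ltW p0)).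
have -> : p * (y `^ p / p + s `^ p / q) = y `^ p + (p - 1) * s `^ p.
  by rewrite /q; field; lra.
move=> h; have hm : s * s `^ (p - 1) = s `^ p by rewrite mulr_powRB1.
nra.
Qed.

Lemma young_bound (R : realType) (alpha a b A1 B1 : R) : 0 < alpha < 1 ->
  0 <= a -> 0 <= b -> 0 <= A1 -> 0 <= B1 ->
  a `^ alpha^-1 <= A1 -> b `^ (1 - alpha)^-1 <= B1 ->
  a * b <= alpha * A1 + (1 - alpha) * B1.
Proof.
case/andP=> al0 al1 a0 b0 A10 B10 hA hB.
have be0 : 0 < 1 - alpha by lra.
have root_le (c r e : R) : 0 < e -> 0 <= c -> 0 <= r -> c `^ e^-1 <= r -> c <= r `^ e.
  move=> e0 c0 r0 h; have := ge0_ler_powR (ltW e0) _ _ h.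
  by rewrite !nnegrE powR_ge0 -powRrM mulVf ?gt_eqF // powRr1 //; apply.
have aA := root_le _ _ _ al0 a0 A10 hA.
have bB := root_le _ _ _ be0 b0 B10 hB.
apply: le_trans (ler_pM a0 b0 aA bB) _.
have pq : alpha^-1^-1 + (1 - alpha)^-1^-1 = 1 by rewrite !invrK; lra.
have := conjugate_powR (powR_ge0 A1 alpha) (powR_ge0 B1 (1 - alpha))
  (_ : 0 < alpha^-1) (_ : 0 < (1 - alpha)^-1) pq.
by rewrite -!powRrM !mulfV ?gt_eqF // !powRr1 // !invrK ?invr_gt0 //; lra.
Qed.
Section OperatorModulus.
Variable R : realType.
Variable H : lmodType R[i].
Variable ip : H -> H -> R[i].
Hypothesis hip : is_inner_product ip.
Local Notation rip x y := (complex.Re (ip x y)).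
Local Notation hn := (hnorm ip).

(* The adjoint of a bounded operator is bounded, with T as its own adjoint.
   Bound: |T^* z|^2 = <z, T T^* z> <= |z| M |T^* z|. *)
Lemma bounded_adjoint T Ts : is_bounded ip T -> is_adjoint ip T Ts ->
  is_bounded ip Ts /\ is_adjoint ip Ts T.
Proof.
case=> hT [M hM] hTs; split; last first.
  by move=> x y; rewrite (ip_sym hip) -hTs -(ip_sym hip).
split; first exact: adjoint_lin hTs.
exists (Num.max M 0) => z; have hz := hn_ge0 ip z.
have [e0|en0] := eqVneq (hn (Ts z)) 0; first by rewrite e0 mulr_ge0 ?le_max ?lexx ?orbT.
have hp : 0 < hn (Ts z) by rewrite lt_def en0 hn_ge0.
have hb : hn (T (Ts z)) <= Num.max M 0 * hn (Ts z).
  by apply: le_trans (hM _) _; apply: ler_wpM2r; rewrite ?hn_ge0 ?le_max ?lexx.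
rewrite -(ler_pM2l hp) -expr2 (hn_sq hip) -hTs; apply: le_trans (rip_le hip _ _) _.
by have := ler_wpM2r hz hb; lra.
Qed.

Lemma bounded_pos T : is_bounded ip T ->
  exists2 M, 0 < M & forall x, hn (T x) <= M * hn x.
Proof.
case=> _ [M hM]; exists (Num.max M 1); first by rewrite lt_max ltr01 orbT.
move=> x; apply: le_trans (hM x) _; apply: ler_wpM2r; first exact: hn_ge0.
by rewrite le_max lexx.
Qed.

Lemma gram_pos_op T Ts : is_bounded ip T -> is_adjoint ip T Ts ->
  exists M, pos_op ip (fun y => Ts (T y)) M.
Proof.
move=> bT hTs; have [bTs _] := bounded_adjoint bT hTs.
have [M M0 hM] := bounded_pos bT; have [N N0 hN] := bounded_pos bTs.
exists (N * M); split.
- by apply: lin_comp; [case: bTs | case: bT].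
- by move=> x y; rewrite -hTs (ip_sym hip) -hTs -(ip_sym hip).
- by move=> y; rewrite (ip_sym hip) -hTs Re_conjc; apply: ip_ge0.
- exact: mulr_gt0.
- move=> y; apply: le_trans (hN _) _; rewrite -mulrA.
  by apply: ler_wpM2l; [exact: ltW | exact: hM].
Qed.

(* The modulus S = sqrt(T^* T) is positive and |S y| = |T y|: S^2 is the
   calculus of sqrt^2 = X at T^* T. *)
Lemma modulus_op T Ts S : is_bounded ip T -> is_adjoint ip T Ts ->
  is_fcalc ip (fun y => Ts (T y)) Num.sqrt S ->
  exists K, pos_op ip S K /\ forall y, rip (S y) (S y) = rip (T y) (T y).
Proof.
move=> bT hTs hS; have [M gram] := gram_pos_op bT hTs.
have fS := pos_op_fcalc gram hS.
have [K pS] := fcalc_pos_op hip gram fS (fun t _ => sqrtr_ge0 t).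
exists K; split => // y; have [_ saS _ K0 bS] := pS.
have hK t : 0 <= t <= M -> `|Num.sqrt t| <= Num.sqrt M.
  by case/andP=> t0 tM; rewrite ger0_norm ?sqrtr_ge0 // ler_wsqrtr.
have := fcalc_poly_eq hip gram (fcalc_sq hip gram fS hK K0 bS) (l := 'X).
move=> /(_ _ y) h; rewrite -saS h; last first.
  by move=> t /andP [t0 _]; rewrite hornerX sqr_sqrtr.
by rewrite pevalX (ip_sym hip y) -hTs Re_conjc.
Qed.
End OperatorModulus.

Section OperatorJensen.
Variable R : realType.
Variable H : lmodType R[i].
Variable ip : H -> H -> R[i].
Hypothesis hip : is_inner_product ip.
Local Notation rip x y := (complex.Re (ip x y)).

Variables (x : H) (hx1 : rip x x = 1).

(* Jensen's operator inequality f(<P x, x>) <= <f(P) x, x> for a unit vector: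
   compare f with its supporting line at s = <P x, x>. *)
Lemma jensen_op P M F f : pos_op ip P M -> fcalc_on ip P M f F ->
  increasing_on_nonneg f -> convex_on_nonneg f -> f (rip (P x) x) <= rip (F x) x.
Proof.
move=> pP hF hfi hfc; have [_ _ posP _ _] := pP.
set s := rip (P x) x; have [c hc] := supporting_line hfi hfc (posP x).
have := fcalc_ge hip pP hF (l := (f s)%:P + c *: ('X - s%:P)) _ x.
rewrite pevalD pevalC pevalZ pevalB pevalX pevalC (ripDl hip) !(ripZl hip).
rewrite (ripBl hip) (ripZl hip) hx1 -/s !mulr1 subrr mulr0 addr0; apply.
move=> t /andP [t0 _]; rewrite hornerD hornerC hornerZ hornerXsubC.
exact: hc.
Qed.

(* The same argument for the convex function t |-> t^q applied to S^2, using
   the tangent of t^q at s = |S x|^2: |S x|^(2q) <= <S^(2q) x, x>. *)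
Lemma jensen_pow_op S K P (q : R) : pos_op ip S K ->
  fcalc_on ip S K (fun t => t `^ (2 * q)) P -> 1 < q ->
  (rip (S x) (S x)) `^ q <= rip (P x) x.
Proof.
move=> pS hP q1; have [hS saS _ _ _] := pS.
set s := rip (S x) (S x); have s0 : 0 <= s := ip_ge0 hip _.
have := fcalc_ge hip pS hP
  (l := (s `^ q)%:P + (q * s `^ (q - 1)) *: ('X * 'X - s%:P)) _ x.
rewrite pevalD pevalC pevalZ pevalB (pevalM hS) !pevalX pevalC (ripDl hip).
rewrite !(ripZl hip) (ripBl hip) (ripZl hip) hx1 saS -/s !mulr1 subrr mulr0 addr0.
apply=> t /andP [t0 _]; rewrite hornerD hornerC hornerZ hornerD hornerN hornerC.
rewrite hornerM hornerX powRrM (@powR_mulrn _ t 2 t0) expr2.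
by apply: pow_tangent => //; rewrite mulr_ge0.
Qed.

Lemma square_form S K P : pos_op ip S K -> fcalc_on ip S K (fun t => t ^+ 2) P ->
  forall y, rip (P y) y = rip (S y) (S y).
Proof.
move=> pS hP y; have [hS saS _ _ _] := pS.
rewrite (fcalc_poly_eq hip pS hP (l := 'X * 'X)) ?(pevalM hS) ?pevalX ?saS //.
by move=> t _; rewrite hornerM hornerX expr2.
Qed.

Lemma calculus_chain S K g P f F : pos_op ip S K -> is_fcalc ip S g P ->
  (forall t, 0 <= t -> 0 <= g t) -> is_fcalc ip P f F ->
  increasing_on_nonneg f -> convex_on_nonneg f ->
  [/\ 0 <= rip (P x) x, f (rip (P x) x) <= rip (F x) x
    & ip (F x) x = (rip (F x) x)%:C].
Proof.
move=> pS hP g0 hF hfi hfc; have fP := pos_op_fcalc pS hP.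
have [KP pP] : exists KP, pos_op ip P KP.
  by apply: (fcalc_pos_op hip pS fP) => t /andP [t0 _]; apply: g0.
have fF := pos_op_fcalc pP hF; have [_ _ posP _ _] := pP.
split; [exact: posP | exact: jensen_op pP fF hfi hfc |].
by apply: real_of_Im0; exact: (fcalc_Im hip pP fF x).
Qed.
End OperatorJensen.

Section MainInequalities.
Variable R : realType.
Variable H : lmodType R[i].
Variable ip : H -> H -> R[i].
Hypothesis hip : is_inner_product ip.
Local Notation rip x y := (complex.Re (ip x y)).
Local Notation hn := (hnorm ip).

Variables A B As Bs absA absBs : H -> H.
Hypotheses (hA : is_bounded ip A) (hB : is_bounded ip B).
Hypotheses (hAs : is_adjoint ip A As) (hBs : is_adjoint ip B Bs).
Hypothesis habsA : is_fcalc ip (fun y => As (A y)) Num.sqrt absA.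
Hypothesis habsBs : is_fcalc ip (fun y => B (Bs y)) Num.sqrt absBs.
Variables (x : H) (f : R -> R).
Hypotheses (hx1 : rip x x = 1) (hfi : increasing_on_nonneg f) (hfc : convex_on_nonneg f).

Lemma modulus_A : exists K, pos_op ip absA K /\ rip (absA x) (absA x) = rip (A x) (A x).
Proof. by have [K [pK e]] := modulus_op hip hA hAs habsA; exists K. Qed.

Lemma modulus_Bs : exists K, pos_op ip absBs K /\ rip (absBs x) (absBs x) = rip (Bs x) (Bs x).
Proof.
have [bBs hBsB] := bounded_adjoint hip hB hBs.
by have [K [pK e]] := modulus_op hip bBs hBsB habsBs; exists K.
Qed.

Lemma buzano_AB : cabs (ip (A x) x * ip (B x) x) *+ 2 <=
  cabs (ip (B (A x)) x) + hn (A x) * hn (Bs x).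
Proof. by have := buzano hip (A x) (Bs x) hx1; rewrite -(hBs x x) -(hBs (A x) x). Qed.

(* With a = |A x|^2, b = |B^* x|^2, P_A = |A|^(2/t) and
   P_B = |B^*|^(2/(1-t)): a <= <P_A x, x>^t and b <= <P_B x, x>^(1-t), so by
   Young, convexity and Jensen
     f(a b) <= t f(<P_A x, x>) + (1-t) f(<P_B x, x>)
            <= t <f(P_A) x, x> + (1-t) <f(P_B) x, x>,
   and Buzano bounds f(|<Ax,x><Bx,x>|^2) by the mean of f(|<BAx,x>|^2) and
   f(a b). *)
Lemma first_inequality alpha : 0 < alpha < 1 ->
  forall PA FA PB FB : H -> H,
  is_fcalc ip absA (fun t => t `^ (2 / alpha)) PA -> is_fcalc ip PA f FA ->
  is_fcalc ip absBs (fun t => t `^ (2 / (1 - alpha))) PB -> is_fcalc ip PB f FB ->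
  (f (cabs (ip (A x) x * ip (B x) x) ^+ 2))%:C <=
    ((f (cabs (ip (B (A x)) x) ^+ 2))%:C
     + ip (alpha%:C *: FA x + (1 - alpha)%:C *: FB x) x) / 2%:R.
Proof.
move=> hal PA FA PB FB hPA hFA hPB hFB; have /andP [al0 al1] := hal.
have [KA [pA eA]] := modulus_A; have [KB [pB eB]] := modulus_Bs.
have [A10 jA rA] := calculus_chain hip hx1 pA hPA (fun t _ => powR_ge0 _ _) hFA hfi hfc.
have [B10 jB rB] := calculus_chain hip hx1 pB hPB (fun t _ => powR_ge0 _ _) hFB hfi hfc.
have qA : 1 < alpha^-1 by rewrite invf_gt1.
have qB : 1 < (1 - alpha)^-1 by rewrite invf_gt1 ?subr_gt0 // ltrBlDr ltrDl.
have powA := jensen_pow_op hip hx1 pA (pos_op_fcalc pA hPA) qA.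
have powB := jensen_pow_op hip hx1 pB (pos_op_fcalc pB hPB) qB.
rewrite eA in powA; rewrite eB in powB.
have ab := young_bound hal (ip_ge0 hip _) (ip_ge0 hip _) A10 B10 powA powB.
have fab : f (rip (A x) (A x) * rip (Bs x) (Bs x)) <=
    alpha * rip (FA x) x + (1 - alpha) * rip (FB x) x.
  apply: le_trans (hfi (mulr_ge0 (ip_ge0 hip _) (ip_ge0 hip _)) ab) _.
  apply: le_trans (hfc A10 B10 (_ : 0 <= alpha <= 1)) _; first by rewrite !ltW.
  have be0 : 0 <= 1 - alpha by lra.
  by have := ler_wpM2l (ltW al0) jA; have := ler_wpM2l be0 jB; lra.
have := midpoint_bound_sq hfi hfc (cabs_ge0 _) (cabs_ge0 _)
  (mulr_ge0 (hn_ge0 _ _) (hn_ge0 _ _)) buzano_AB.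
rewrite exprMn !(hn_sq hip) (ipDl hip) !(ipZl hip) rA rB.
rewrite -!rmorphM -!rmorphD /= -(rmorph_nat (real_complex R) 2) -fmorphV -rmorphM /=.
by rewrite lecR; lra.
Qed.

(* Second estimate: the same argument with |A x| |B^* x| <= (a + b) / 2 and
   <|A|^2 x, x> = a, <|B^*|^2 x, x> = b in place of Young's inequality. *)
Lemma second_inequality (PA FA PB FB : H -> H) :
  is_fcalc ip absA (fun t => t ^+ 2) PA -> is_fcalc ip PA f FA ->
  is_fcalc ip absBs (fun t => t ^+ 2) PB -> is_fcalc ip PB f FB ->
  (f (cabs (ip (A x) x * ip (B x) x)))%:C <=
    (1 / 2%:R) * (f (cabs (ip (B (A x)) x)))%:C + (1 / 4%:R) * ip (FA x + FB x) x.
Proof.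
move=> hPA hFA hPB hFB.
have [KA [pA eA]] := modulus_A; have [KB [pB eB]] := modulus_Bs.
have [_ jA rA] := calculus_chain hip hx1 pA hPA (fun t _ => sqr_ge0 t) hFA hfi hfc.
have [_ jB rB] := calculus_chain hip hx1 pB hPB (fun t _ => sqr_ge0 t) hFB hfi hfc.
rewrite (square_form hip pA (pos_op_fcalc pA hPA)) eA in jA.
rewrite (square_form hip pB (pos_op_fcalc pB hPB)) eB in jB.
have amgm : hn (A x) * hn (Bs x) <= (rip (A x) (A x) + rip (Bs x) (Bs x)) / 2.
  by have := sqr_ge0 (hn (A x) - hn (Bs x)); rewrite -!(hn_sq hip); nra.
have fv := le_trans (hfi (mulr_ge0 (hn_ge0 _ _) (hn_ge0 _ _)) amgm)
  (convex_midpoint hfc (ip_ge0 hip (A x)) (ip_ge0 hip (Bs x))).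
have := midpoint_bound hfi hfc (cabs_ge0 _) (cabs_ge0 _)
  (mulr_ge0 (hn_ge0 _ _) (hn_ge0 _ _)) buzano_AB.
rewrite (ipDl hip) rA rB -!rmorphD /= !div1r -!(rmorph_nat (real_complex R)) -!fmorphV.
by rewrite -!rmorphM -!rmorphD /= lecR; lra.
Qed.
End MainInequalities.

Theorem theorem3p1 (R : realType) (H : lmodType R[i]) (ip : H -> H -> R[i])
  (hH : is_hilbert ip)
  (A B As Bs : H -> H)
  (hA : is_bounded ip A) (hB : is_bounded ip B)
  (hAs : is_adjoint ip A As) (hBs : is_adjoint ip B Bs)
  (absA absBs : H -> H)
  (habsA : is_fcalc ip (fun y => As (A y)) Num.sqrt absA)    (* |A| *)
  (habsBs : is_fcalc ip (fun y => B (Bs y)) Num.sqrt absBs)  (* |B^*| *)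
  (x : H) (hx : hnorm ip x = 1)
  (f : R -> R) (hfi : increasing_on_nonneg f) (hfc : convex_on_nonneg f) :
  (forall alpha : R, 0 < alpha < 1 ->
    forall PA FA PB FB : H -> H,
    is_fcalc ip absA (fun t => t `^ (2 / alpha)) PA ->          (* |A|^(2/a) *)
    is_fcalc ip PA f FA ->                                       (* f(|A|^(2/a)) *)
    is_fcalc ip absBs (fun t => t `^ (2 / (1 - alpha))) PB ->    (* |B^*|^(2/(1-a)) *)
    is_fcalc ip PB f FB ->                                       (* f(|B^*|^(2/(1-a))) *)
    (f (cabs (ip (A x) x * ip (B x) x) ^+ 2))%:C <=
      ((f (cabs (ip (B (A x)) x) ^+ 2))%:C
       + ip (alpha%:C *: FA x + (1 - alpha)%:C *: FB x) x) / 2%:R)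
  /\
  (forall PA FA PB FB : H -> H,
    is_fcalc ip absA (fun t => t ^+ 2) PA ->                     (* |A|^2 *)
    is_fcalc ip PA f FA ->                                       (* f(|A|^2) *)
    is_fcalc ip absBs (fun t => t ^+ 2) PB ->                    (* |B^*|^2 *)
    is_fcalc ip PB f FB ->                                       (* f(|B^*|^2) *)
    (f (cabs (ip (A x) x * ip (B x) x)))%:C <=
      (1 / 2%:R) * (f (cabs (ip (B (A x)) x)))%:C
      + (1 / 4%:R) * ip (FA x + FB x) x).
Proof.
have [hip _] := hH.
have hx1 : complex.Re (ip x x) = 1 by rewrite -(hn_sq hip) hx expr1n.
by split; [move=> alpha; exact: first_inequality | exact: second_inequality].
Qed.
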